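(* Let $(\mathcal D,\mathcal R)$ be a CLKID$^\omega_N$ pre-proof tree whose root is labelled by the sequent $S$. Normalising it yields a pre-proof tree-set $(\mathcal{MD},\mathcal{MR})$ with the following two properties. (1) $(\mathcal{MD},\mathcal{MR})$ contains a tree whose root is labelled by $S$. (2) In every rb-path $[R,\dots,H,B]$ of $(\mathcal{MD},\mathcal{MR})$, the bud $B$ is the only node labelled by the premise of a $(Subst)$ step. Moreover, a node of such an rb-path is a $(Subst)$-node if and only if it is the IH-node $H$.
   Context: Rules. CLKID$^\omega_N$ is a sequent calculus for first-order logic with inductive definitions. Among its rules, $(Subst)$ infers $\Gamma[\theta]\vdash\Delta[\theta]$ from $\Gamma\vdash\Delta$ for a substitution $\theta$. A $(Subst)$-node is a node whose sequent is the conclusion of a $(Subst)$ step. Pre-proofs. A pre-proof tree $(\mathcal D,\mathcal R)$ is a finite derivation tree. Each terminal node is either a leaf (the conclusion of a 0-premise rule) or a bud, and $\mathcal R$ assigns to each bud a companion node labelled by the same sequent. A pre-proof tree-set $(\mathcal{MD},\mathcal{MR})$ is a finite set of such trees in which companions may lie in any tree. $S(N)$ denotes the label of node $N$. Paths. A path is a list of nodes in which each next node is either labelled by a premise of the rule applied at the current internal node (its child), or is the companion of the current node when that node is a bud. An rb-path is a path $[R,\dots,H,B]$ from the root $R$ of a tree to a bud $B$ of the same tree that contains no other bud; $H$ is called the IH-node. Normalisation. It is the exhaustive application of the following operations. (O1) For an internal non-bud node $N$ labelled by the premise of a $(Subst)$ step: the subtree rooted at $N$ is detached to form a new tree rooted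 at a copy of $N$, and $N$'s original position becomes a bud whose companion is that new root. (O2) For a non-root companion $C$: the subtree rooted at $C$ is detached to form a new tree with root $C^*$ labelled $S(C)$, which becomes the companion of the buds formerly pointing to $C$. At $C$'s original position, a node labelled $S(C)$ becomes the conclusion of a $(Subst)$ step with the empty substitution, whose premise is a new bud with companion $C^*$. (O3) For a bud $B$ whose sequent is the premise of a rule other than $(Subst)$: apply $(Subst)$ with the empty substitution to $S(B)$, and the node labelled by its premise becomes the new bud, with the same companion. *)

From Stdlib Require Import Relations.
From mathcomp Require Import all_boot.
Set Implicit Arguments. Unset Strict Implicit. Unset Printing Implicit Defensive.

(* CLKID^omega_N is an instance of this interface.                          *)
Record calc := Calc {
  sequent : Type;
  substitution : Type;
  rulename : Type;
  subst_seq : substitution -> sequent -> sequent;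
  empty_subst : substitution;
  subst_seq_empty : forall s, subst_seq empty_subst s = s;
  rule_inst : rulename -> sequent -> seq sequent -> Prop
}.

Inductive rule (L : calc) :=
| RSubst of substitution L
| ROther of rulename L.

Definition rule_ok (L : calc) (r : rule L) (c : sequent L) (ps : seq (sequent L)) : Prop :=
  match r with
  | RSubst th => exists p, ps = [:: p] /\ c = subst_seq th p
  | ROther r' => rule_inst r' c ps
  end.

(* Finite sets of derivation trees, as node-identified graphs.              *)
(*   app n  : Some (r, ch) if rule r is applied at n with premise nodes ch   *)
(*            (ch = [::] : a leaf, i.e. a 0-premise rule);                   *)
(*            None if n is a bud                                              *)
(*   comp n : the companion of n (meaningful for buds)                       *)
Record tset (L : calc) := TSet {
  nodes : seq nat;
  lab : nat -> sequent L;
  app : nat -> option (rule L * seq nat);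
  comp : nat -> nat
}.

Section TreeSets.
Variable L : calc.
Implicit Types (T : tset L).

Definition children T n : seq nat :=
  if app T n is Some (_, ch) then ch else [::].

Definition is_bud T n : Prop := app T n = None.

Definition is_internal T n : Prop := children T n <> [::].

Definition is_parent T p n : Prop := p \in nodes T /\ n \in children T p.

Definition is_root T n : Prop := n \in nodes T /\ ~ (exists p, is_parent T p n).

Definition subst_premise T n : Prop :=
  exists p th ch, p \in nodes T /\ app T p = Some (RSubst th, ch) /\ n \in ch.

Definition other_premise T n : Prop :=
  exists p r ch, p \in nodes T /\ app T p = Some (ROther r, ch) /\ n \in ch.

Definition is_subst_node T n : Prop :=
  exists th ch, app T n = Some (RSubst th, ch).

Definition is_companion T c : Prop :=
  exists b, b \in nodes T /\ is_bud T b /\ comp T b = c.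

Definition preproof_tset T : Prop :=
  [/\ uniq (nodes T),
      (forall n, n \in nodes T ->
         match app T n with
         | Some (r, ch) => [/\ {subset ch <= nodes T}, uniq ch &
                                rule_ok r (lab T n) (map (lab T) ch)]
         | None => comp T n \in nodes T /\ lab T (comp T n) = lab T n
         end),
      (forall p q n, is_parent T p n -> is_parent T q n -> p = q) &
      (exists h : nat -> nat, forall p n, is_parent T p n -> h n < h p)].

Definition descendant T : relation nat := clos_refl_trans nat (is_parent T).

Definition preproof_tree T (rho : nat) : Prop :=
  [/\ preproof_tset T, is_root T rho & forall n, n \in nodes T -> descendant T rho n].

Definition upd (A : Type) (f : nat -> A) (x : nat) (v : A) : nat -> A :=
  fun y => if y == x then v else f y.

Definition repl (a b : nat) (y : nat) : nat := if y == a then b else y.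

Definition app_repl T (a b : nat) : nat -> option (rule L * seq nat) :=
  fun y => match app T y with
           | Some (r, ch) => Some (r, map (repl a b) ch)
           | None => None
           end.

(* (O1): N internal non-bud, premise of a (Subst) step.  The subtree rooted *)
(* at N (keeping N's identity) becomes a new tree; N's former position is   *)
(* taken by a fresh bud b labelled S(N) whose companion is N.               *)
Definition op1 T T' : Prop :=
  exists N b,
    [/\ N \in nodes T, is_internal T N, subst_premise T N,
        b \notin nodes T &
        T' = TSet (b :: nodes T) (upd (lab T) b (lab T N))
                  (upd (app_repl T N b) b None) (upd (comp T) b N)].

(* (O2): C a non-root companion.  The subtree rooted at C (keeping C's      *)
(* identity, so C plays the role of C*, companion of the buds formerly      *)
(* pointing to C) becomes a new tree; C's former position is taken by a     *)
(* fresh node x labelled S(C), conclusion of (Subst) with the empty          *)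
(* substitution, whose premise is a fresh bud b with companion C.           *)
Definition op2 T T' : Prop :=
  exists C x b,
    [/\ C \in nodes T, is_companion T C, ~ is_root T C,
        [/\ x \notin nodes T, b \notin nodes T & x != b] &
        T' = TSet (x :: b :: nodes T)
                  (upd (upd (lab T) x (lab T C)) b (lab T C))
                  (upd (upd (app_repl T C x) x
                      (Some (RSubst (empty_subst L), [:: b]))) b None)
                  (upd (comp T) b C)].

Definition op3 T T' : Prop :=
  exists B b,
    [/\ B \in nodes T, is_bud T B, other_premise T B, b \notin nodes T &
        T' = TSet (b :: nodes T) (upd (lab T) b (lab T B))
                  (upd (upd (app T) B (Some (RSubst (empty_subst L), [:: b]))) b None)
                  (upd (comp T) b (comp T B))].

Definition norm_step T T' : Prop := op1 T T' \/ op2 T T' \/ op3 T T'.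

Definition normal T : Prop := forall T', ~ norm_step T T'.

Definition normalises T0 T : Prop :=
  clos_refl_trans (tset L) norm_step T0 T /\ normal T.

Fixpoint child_chain T (x : nat) (l : seq nat) : Prop :=
  match l with
  | [::] => True
  | y :: l' => is_parent T x y /\ child_chain T y l'
  end.

Definition rb_path T (l : seq nat) (H B : nat) : Prop :=
  exists R mid,
    [/\ l = R :: rcons mid B, H = last R mid, is_root T R,
        child_chain T R (rcons mid B) &
        is_bud T B /\ (forall x, x \in R :: mid -> ~ is_bud T x)].

End TreeSets.

From Pilot Require Import Defs.
From Stdlib Require Import Relations.
From mathcomp Require Import all_boot zify boolp.
Set Implicit Arguments. Unset Strict Implicit. Unset Printing Implicit Defensive.

(* Each of the operations (O1)-(O3) keeps a pre-proof tree-set a pre-proof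
   tree-set, keeps every root (with its label), and strictly decreases
   2 * #(non-root companions) + #(buds that are premises of a non-(Subst) rule)
   + #(internal nodes that are premises of a (Subst) step), so normalisation
   terminates.  In a normal form no internal node is a (Subst) premise and the
   parent of every bud is a (Subst)-node.  On an rb-path [R, ..., H, B] every
   node before B has a child on the path and is therefore internal, so B is the
   only (Subst) premise; and a (Subst)-node on the path has a (Subst)-premise
   child on the path, which must be B, so it is H. *)

Definition pcount (P : nat -> Prop) (s : seq nat) : nat := count (fun n => `[< P n >]) s.

Lemma pcount_cons P n s : pcount P (n :: s) = `[< P n >] + pcount P s.
Proof. by []. Qed.

Lemma pcount_le (P Q : nat -> Prop) s :
  {in s, forall n, P n -> Q n} -> pcount P s <= pcount Q s.
Proof.
elim: s => //= y s IH PQ; apply: leq_add; last by apply: IH => n ns; apply: PQ; rewrite inE ns orbT.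
by case: asboolP => // Py; rewrite (asboolT (PQ y (mem_head y s) Py)).
Qed.

Lemma pcount_lt (P Q : nat -> Prop) s x :
  {in s, forall n, P n -> Q n} -> x \in s -> Q x -> ~ P x -> pcount P s < pcount Q s.
Proof.
elim: s => //= y s IH PQ; have PQs : {in s, forall n, P n -> Q n}.
  by move=> n ns; apply: PQ; rewrite inE ns orbT.
rewrite inE => /orP[/eqP-> | xs] Qx NPx.
  by rewrite (asboolF NPx) (asboolT Qx) ltnS; apply: pcount_le.
have := IH PQs xs Qx NPx; have := pcount_le PQs.
case: asboolP => [Py|_]; last by case: (`[< Q y >]); lia.
by rewrite (asboolT (PQ y (mem_head y s) Py)); lia.
Qed.

Lemma mem_map_repl a c ch n : c \notin ch ->
  n \in map (repl a c) ch <-> (n = c /\ a \in ch) \/ (n <> a /\ n \in ch).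
Proof.
move=> cch; split.
  case/mapP => y ych ->; rewrite /repl; case: eqP => [ya|/eqP ya]; first by left; rewrite -ya.
  by right; split=> //; apply/eqP.
case=> [[-> ach] | [na nch]]; apply/mapP; first by exists a; rewrite /repl ?eqxx.
by exists n => //; rewrite /repl; case: eqP.
Qed.

Section TreeSetFacts.
Variable L : calc.
Implicit Types (T : tset L).

Definition is_other_node T n : Prop := exists r ch, app T n = Some (ROther r, ch).

Lemma subst_premiseE T n :
  subst_premise T n <-> exists p, is_parent T p n /\ is_subst_node T p.
Proof.
rewrite /is_parent /children; split.
  by move=> [p [th [ch [pT [appp nch]]]]]; exists p; rewrite appp; split; last exists th, ch.
by move=> [p [[pT] + [th [ch appp]]]]; rewrite appp => nch; exists p, th, ch.
Qed.

Lemma other_premiseE T n :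
  other_premise T n <-> exists p, is_parent T p n /\ is_other_node T p.
Proof.
rewrite /is_parent /children; split.
  by move=> [p [r [ch [pT [appp nch]]]]]; exists p; rewrite appp; split; last exists r, ch.
by move=> [p [[pT] + [r [ch appp]]]]; rewrite appp => nch; exists p, r, ch.
Qed.

Lemma subst_other_nodeF T p : is_subst_node T p -> is_other_node T p -> False.
Proof. by move=> [th [ch E]] [r [ch']]; rewrite E. Qed.

Lemma parent_node_kind T p n :
  is_parent T p n -> is_subst_node T p \/ is_other_node T p.
Proof.
rewrite /is_parent /children /is_subst_node /is_other_node.
case: (app T p) => [[[th|r] ch]|] [_ //].
  by left; exists th, ch.
by right; exists r, ch.
Qed.

Lemma parent_internal T p n : is_parent T p n -> is_internal T p.
Proof. by move=> [_ np] chp; rewrite chp in np. Qed.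

(* Whether a node is a (Subst)-node, another rule node or a bud depends only
   on the rule applied there, not on its premises. *)
Definition same_rule T T' y := omap fst (app T' y) = omap fst (app T y).

Lemma same_rule_subst T T' y :
  same_rule T T' y -> is_subst_node T' y <-> is_subst_node T y.
Proof.
rewrite /same_rule /is_subst_node.
case: (app T' y) (app T y) => [[r ch]|] [[r' ch']|] //= [<-].
by split=> -[th [ch0 [-> _]]]; [exists th, ch' | exists th, ch].
Qed.

Lemma same_rule_other T T' y :
  same_rule T T' y -> is_other_node T' y <-> is_other_node T y.
Proof.
rewrite /same_rule /is_other_node.
case: (app T' y) (app T y) => [[r ch]|] [[r' ch']|] //= [<-].
by split=> -[th [ch0 [-> _]]]; [exists th, ch' | exists th, ch].
Qed.

Lemma same_rule_bud T T' y : same_rule T T' y -> is_bud T' y <-> is_bud T y.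
Proof. by rewrite /same_rule /is_bud; case: (app T' y) (app T y) => [[r ch]|] [[r' ch']|]. Qed.

End TreeSetFacts.

Section PreproofFacts.
Variables (L : calc) (T : tset L).
Hypothesis ppT : preproof_tset T.

Lemma parent_uniq p q n : is_parent T p n -> is_parent T q n -> p = q.
Proof. by case: ppT => _ _ uniq_par _; apply: uniq_par. Qed.

Lemma child_mem p n : is_parent T p n -> n \in nodes T.
Proof.
case: ppT => _ wf _ _ [pT]; move: (wf p pT); rewrite /children.
by case: (app T p) => // [[r ch]] [sub _ _] /sub.
Qed.

Lemma comp_mem n : n \in nodes T -> is_bud T n -> Defs.comp T n \in nodes T.
Proof. by case: ppT => _ wf _ _ nT bud; move: (wf n nT); rewrite bud => -[]. Qed.

Lemma parent_neq p n : is_parent T p n -> p <> n.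
Proof. by case: ppT => _ _ _ [h hP] /hP + pn; rewrite pn ltnn. Qed.

Lemma fresh_not_child p c : c \notin nodes T -> ~ is_parent T p c.
Proof. by move=> /negP cT /child_mem. Qed.

Lemma fresh_notin_children p c : c \notin nodes T -> p \in nodes T -> c \notin children T p.
Proof. by move=> cT pT; apply/negP => cp; apply: (fresh_not_child cT (conj pT cp)). Qed.

Lemma fresh_not_companion c : c \notin nodes T -> ~ is_companion T c.
Proof. by move=> /negP cT [n [nT [bud nc]]]; apply: cT; rewrite -nc comp_mem. Qed.

Lemma map_repl_premises (lab' : nat -> sequent L) a c ch :
  c \notin nodes T -> {subset ch <= nodes T} -> uniq ch ->
  lab' c = lab T a -> {in nodes T, lab' =1 lab T} ->
  [/\ {subset map (repl a c) ch <= c :: nodes T}, uniq (map (repl a c) ch) &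
      map lab' (map (repl a c) ch) = map (lab T) ch].
Proof.
move=> cT chT uch labc labT; have cch y : y \in ch -> y != c by move/chT; apply: (memPn cT).
split.
- by move=> n /mapP [y /chT yT ->]; rewrite /repl; case: (y == a); rewrite inE ?eqxx ?yT ?orbT.
- rewrite map_inj_in_uniq // => y z /cch yc /cch zc; rewrite /repl.
  by case: eqP => [->|_]; case: eqP => [->|_] // eqc; move: yc zc; rewrite ?eqc ?eqxx.
- rewrite -map_comp; apply/eq_in_map => y ych /=; rewrite /repl.
  by case: eqP => [->|_]; rewrite ?labc // labT ?chT.
Qed.

End PreproofFacts.

Section Redexes.
Variable L : calc.
Implicit Types (T : tset L).

Definition premise_redex T n := is_internal T n /\ subst_premise T n.
Definition companion_redex T n := is_companion T n /\ ~ is_root T n.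
Definition bud_redex T n := is_bud T n /\ other_premise T n.

(* The weight 2 pays for the (O1)-redex that an (O2) step may create. *)
Definition redex_measure T : nat :=
  2 * pcount (companion_redex T) (nodes T) + pcount (bud_redex T) (nodes T)
  + pcount (premise_redex T) (nodes T).

End Redexes.

Section Op1.
Variables (L : calc) (T : tset L) (N b : nat).
Hypotheses (ppT : preproof_tset T) (NT : N \in nodes T) (b_fresh : b \notin nodes T).

Definition op1_tset : tset L :=
  TSet (b :: nodes T) (upd (lab T) b (lab T N))
       (upd (app_repl T N b) b None) (upd (Defs.comp T) b N).

Let old_neq y : y \in nodes T -> y != b := memPn b_fresh y.

Lemma op1_children y :
  children op1_tset y = if y == b then [::] else map (repl N b) (children T y).
Proof. by rewrite /children /= /upd /app_repl; case: eqP => //; case: (app T y) => [[]|]. Qed.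

Lemma op1_parent p n : is_parent op1_tset p n <->
  (n = b /\ is_parent T p N) \/ (n <> N /\ is_parent T p n).
Proof.
split.
  move=> [pT']; rewrite op1_children; case: eqP => // /eqP pb.
  move: pT'; rewrite inE (negbTE pb) /= => pT.
  by case/(mem_map_repl _ _ (fresh_notin_children ppT b_fresh pT)) => [[-> ?]|[? ?]]; [left|right].
move=> par; have pT : p \in nodes T by case: par => -[_ []].
split; first by rewrite inE pT orbT.
rewrite op1_children (negbTE (old_neq pT)).
apply/(mem_map_repl _ _ (fresh_notin_children ppT b_fresh pT)).
by case: par => -[? []]; [left|right].
Qed.

Lemma op1_same_rule y : y != b -> same_rule T op1_tset y.
Proof. by rewrite /same_rule /= /upd /app_repl => /negbTE ->; case: (app T y) => [[]|]. Qed.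

Lemma op1_internal y : y != b -> is_internal op1_tset y <-> is_internal T y.
Proof. by rewrite /is_internal op1_children => /negbTE ->; case: (children T y). Qed.

Lemma op1_lab y : y \in nodes T -> lab op1_tset y = lab T y.
Proof. by move=> /old_neq yb; rewrite /= /upd (negbTE yb). Qed.

Lemma op1_companion c : is_companion op1_tset c <-> c = N \/ is_companion T c.
Proof.
split.
  move=> [n [nT' [bud]]]; rewrite /= /upd; case: eqP => [_ <-|/eqP nb nc]; first by left.
  move: nT'; rewrite inE (negbTE nb) => nT; right; exists n.
  by rewrite -(same_rule_bud (op1_same_rule nb)).
move=> [->|[n [nT [bud nc]]]].
  by exists b; rewrite inE eqxx /is_bud /= /upd eqxx.
exists n; rewrite inE nT orbT (same_rule_bud (op1_same_rule (old_neq nT))).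
by rewrite /= /upd (negbTE (old_neq nT)).
Qed.

Lemma op1_root n : n \in nodes T -> is_root op1_tset n <-> n = N \/ is_root T n.
Proof.
move=> nT; have nT' : n \in nodes op1_tset by rewrite inE nT orbT.
have nb := old_neq nT; rewrite /is_root.
split.
  case: (eqVneq n N) => [->|nN [_ nopar]]; first by left.
  right; split=> // -[p par]; apply: nopar; exists p.
  by apply/op1_parent; right; split=> //; apply/eqP.
move=> root; split=> // -[p /op1_parent [[nb' _]|[nN par]]]; first by rewrite nb' eqxx in nb.
by case: root => [/nN | [_]] //; apply; exists p.
Qed.

Lemma op1_preproof : preproof_tset op1_tset.
Proof.
case: ppT => uT wf uniq_par [h hP]; split.
- by rewrite /= b_fresh uT.
- move=> n; rewrite inE => /orP [/eqP-> | nT].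
    by rewrite /= /upd !eqxx inE NT orbT (negbTE (old_neq NT)).
  move: (wf n nT); rewrite /= /upd /app_repl (negbTE (old_neq nT)).
  case: (app T n) => [[r ch] [chT uch rok] | [cT clab]].
    have [] := map_repl_premises (lab' := upd (lab T) b (lab T N)) (a := N) b_fresh chT uch.
    + by rewrite /upd eqxx.
    + by move=> y /old_neq yb; rewrite /upd (negbTE yb).
    by move=> ? ? ->.
  by rewrite (negbTE (old_neq cT)) inE cT orbT clab.
- move=> p q n /op1_parent [[-> par]|[_ par]] /op1_parent [[nb par']|[_ par']].
  + exact: uniq_par par par'.
  + by case: (fresh_not_child ppT b_fresh par').
  + by rewrite nb in par; case: (fresh_not_child ppT b_fresh par).
  + exact: uniq_par par par'.
- exists (fun y => if y == b then h N else h y) => p n /op1_parent [[-> par]|[_ par]].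
    by rewrite eqxx (negbTE (old_neq par.1)); apply: hP.
  by rewrite (negbTE (old_neq par.1)) (negbTE (old_neq (child_mem ppT par))); apply: hP.
Qed.

Lemma op1_parent_old p n : n \in nodes T -> is_parent op1_tset p n -> n <> N /\ is_parent T p n.
Proof. by move=> /old_neq nb /op1_parent [[nb' _]|//]; rewrite nb' eqxx in nb. Qed.

Lemma op1_subst_premise n :
  n \in nodes T -> subst_premise op1_tset n -> n <> N /\ subst_premise T n.
Proof.
move=> nT /subst_premiseE [p [/(op1_parent_old nT) [nN par] sub]]; split=> //.
by apply/subst_premiseE; exists p; rewrite -(same_rule_subst (op1_same_rule (old_neq par.1))).
Qed.

Lemma op1_other_premise n : n \in nodes T -> other_premise op1_tset n -> other_premise T n.
Proof.
move=> nT /other_premiseE [p [/(op1_parent_old nT) [_ par] oth]].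
by apply/other_premiseE; exists p; rewrite -(same_rule_other (op1_same_rule (old_neq par.1))).
Qed.

Lemma op1_measure :
  is_internal T N -> subst_premise T N -> redex_measure op1_tset < redex_measure T.
Proof.
move=> intN subN.
have no_companion : ~ companion_redex op1_tset b.
  move=> [/op1_companion [bN|cmp] _]; last exact: (fresh_not_companion ppT b_fresh cmp).
  by move: b_fresh; rewrite bN NT.
have no_bud : ~ bud_redex op1_tset b.
  move=> [_ /other_premiseE [p [/op1_parent [[_ par]|[_ par]] oth]]];
    last exact: (fresh_not_child ppT b_fresh par).
  have /subst_premiseE [q [parq subq]] := subN; rewrite (parent_uniq ppT par parq) in oth.
  by apply: (subst_other_nodeF subq); rewrite -(same_rule_other (op1_same_rule (old_neq parq.1))).
have no_premise : ~ premise_redex op1_tset b.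
  by move=> [+ _]; rewrite /is_internal op1_children eqxx.
rewrite /redex_measure; have -> : nodes op1_tset = b :: nodes T by [].
rewrite !pcount_cons !asboolF // !add0n.
have le_companion :
    pcount (companion_redex op1_tset) (nodes T) <= pcount (companion_redex T) (nodes T).
  apply: pcount_le => n nT [/op1_companion [nN|cmp] noroot].
    by case: noroot; apply/(op1_root nT); left.
  by split=> // root; apply: noroot; apply/(op1_root nT); right.
have le_bud : pcount (bud_redex op1_tset) (nodes T) <= pcount (bud_redex T) (nodes T).
  apply: pcount_le => n nT [bud oth]; split; last exact: op1_other_premise.
  by rewrite -(same_rule_bud (op1_same_rule (old_neq nT))).
have lt_premise : pcount (premise_redex op1_tset) (nodes T) < pcount (premise_redex T) (nodes T).
  apply: (pcount_lt (x := N)) => //; last by move=> [_ /(op1_subst_premise NT) []].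
  move=> n nT [int /(op1_subst_premise nT) [_ sub]]; split=> //.
  by rewrite -(op1_internal (old_neq nT)).
lia.
Qed.

End Op1.

Section Op2.
Variables (L : calc) (T : tset L) (C x b : nat).
Hypotheses (ppT : preproof_tset T) (CT : C \in nodes T).
Hypotheses (x_fresh : x \notin nodes T) (b_fresh : b \notin nodes T) (xb : x != b).

Definition op2_tset : tset L :=
  TSet (x :: b :: nodes T)
       (upd (upd (lab T) x (lab T C)) b (lab T C))
       (upd (upd (app_repl T C x) x (Some (RSubst (empty_subst L), [:: b]))) b None)
       (upd (Defs.comp T) b C).

Let old_neq_x y : y \in nodes T -> y != x := memPn x_fresh y.
Let old_neq_b y : y \in nodes T -> y != b := memPn b_fresh y.

Lemma op2_children y : children op2_tset y =
  if y == b then [::] else if y == x then [:: b] else map (repl C x) (children T y).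
Proof.
by rewrite /children /= /upd /app_repl; case: eqP => //; case: eqP => //; case: (app T y) => [[]|].
Qed.

Lemma op2_parent p n : is_parent op2_tset p n <->
  (p = x /\ n = b) \/ (n = x /\ is_parent T p C) \/ (n <> C /\ is_parent T p n).
Proof.
split.
  move=> [pT']; rewrite op2_children; case: eqP => // /eqP pb.
  case: eqP => [-> | /eqP px]; first by rewrite inE => /eqP ->; left.
  move: pT'; rewrite !inE (negbTE pb) (negbTE px) /= => pT.
  case/(mem_map_repl _ _ (fresh_notin_children ppT x_fresh pT)) => [[-> ?]|[? ?]].
    by right; left.
  by right; right.
case=> [[-> ->] | par]; first by rewrite /is_parent op2_children (negbTE xb) eqxx !inE !eqxx.
have pT : p \in nodes T by case: par => -[_ []].
split; first by rewrite !inE pT !orbT.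
rewrite op2_children (negbTE (old_neq_b pT)) (negbTE (old_neq_x pT)).
apply/(mem_map_repl _ _ (fresh_notin_children ppT x_fresh pT)).
by case: par => -[? []]; [left|right].
Qed.

Lemma op2_same_rule y : y \in nodes T -> same_rule T op2_tset y.
Proof.
move=> yT; rewrite /same_rule /= /upd /app_repl (negbTE (old_neq_b yT)) (negbTE (old_neq_x yT)).
by case: (app T y) => [[]|].
Qed.

Lemma op2_internal y : y \in nodes T -> is_internal op2_tset y <-> is_internal T y.
Proof.
move=> yT; rewrite /is_internal op2_children (negbTE (old_neq_b yT)) (negbTE (old_neq_x yT)).
by case: (children T y).
Qed.

Lemma op2_lab y : y \in nodes T -> lab op2_tset y = lab T y.
Proof. by move=> yT; rewrite /= /upd (negbTE (old_neq_b yT)) (negbTE (old_neq_x yT)). Qed.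

Lemma op2_companion c : is_companion op2_tset c <-> c = C \/ is_companion T c.
Proof.
split.
  move=> [n [nT' [bud]]]; rewrite /= /upd; case: eqP => [_ <-|/eqP nb nc]; first by left.
  have nx : n != x by apply: contraPneq bud => ->; rewrite /is_bud /= /upd (negbTE xb) eqxx.
  move: nT'; rewrite !inE (negbTE nb) (negbTE nx) => nT; right; exists n.
  by rewrite -(same_rule_bud (op2_same_rule nT)).
move=> [->|[n [nT [bud nc]]]].
  by exists b; rewrite !inE eqxx orbT /is_bud /= /upd eqxx.
exists n; rewrite !inE nT !orbT (same_rule_bud (op2_same_rule nT)).
by rewrite /= /upd (negbTE (old_neq_b nT)).
Qed.

Lemma op2_parent_old p n : n \in nodes T -> is_parent op2_tset p n -> n <> C /\ is_parent T p n.
Proof.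
move=> nT /op2_parent [[_ nb]|[[nx _]|//]].
  by move: (old_neq_b nT); rewrite nb eqxx.
by move: (old_neq_x nT); rewrite nx eqxx.
Qed.

Lemma op2_root n : n \in nodes T -> is_root op2_tset n <-> n = C \/ is_root T n.
Proof.
move=> nT; have nT' : n \in nodes op2_tset by rewrite !inE nT !orbT.
rewrite /is_root; split.
  case: (eqVneq n C) => [->|nC [_ nopar]]; first by left.
  right; split=> // -[p par]; apply: nopar; exists p.
  by apply/op2_parent; right; right; split=> //; apply/eqP.
move=> root; split=> // -[p /(op2_parent_old nT) [nC par]].
by case: root => [/nC | [_]] //; apply; exists p.
Qed.

Lemma op2_preproof : preproof_tset op2_tset.
Proof.
case: ppT => uT wf uniq_par [h hP]; split.
- by rewrite /= inE negb_or xb x_fresh b_fresh uT.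
- move=> n; rewrite !inE => /orP [/eqP-> | /orP [/eqP-> | nT]].
  + rewrite /= /upd (negbTE xb) !eqxx; split=> //.
      by move=> y; rewrite !inE => ->; rewrite orbT.
    by rewrite /= eqxx; exists (lab T C); rewrite subst_seq_empty.
  + by rewrite /= /upd !eqxx CT (negbTE (old_neq_b CT)) (negbTE (old_neq_x CT)) !orbT.
  move: (wf n nT); rewrite /= /upd /app_repl (negbTE (old_neq_b nT)) (negbTE (old_neq_x nT)).
  case: (app T n) => [[r ch] [chT uch rok] | [cT clab]].
    have [] := map_repl_premises (lab' := upd (upd (lab T) x (lab T C)) b (lab T C)) (a := C)
                 x_fresh chT uch.
    + by rewrite /upd eqxx; case: eqP.
    + by move=> y yT; rewrite /upd (negbTE (old_neq_b yT)) (negbTE (old_neq_x yT)).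
    by move=> sub ? ->; split=> //; move=> y /sub; rewrite !inE => /orP[]->; rewrite ?orbT.
  by rewrite (negbTE (old_neq_b cT)) (negbTE (old_neq_x cT)) cT !orbT clab.
- move=> p q n /op2_parent + /op2_parent.
  case=> [[-> ->]|[[-> par]|[_ par]]] [[-> nb]|[[nx par']|[_ par']]].
  + by [].
  + by move: xb; rewrite nx eqxx.
  + by case: (fresh_not_child ppT b_fresh par').
  + by move: xb; rewrite nb eqxx.
  + exact: uniq_par par par'.
  + by case: (fresh_not_child ppT x_fresh par').
  + by rewrite nb in par; case: (fresh_not_child ppT b_fresh par).
  + by rewrite nx in par; case: (fresh_not_child ppT x_fresh par).
  + exact: uniq_par par par'.
- exists (fun y => if y == b then 0 else if y == x then (h C).+1 else (h y).+1).
  move=> p n /op2_parent [[-> ->]|[[-> par]|[_ par]]].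
  + by rewrite eq_sym (negbTE xb) !eqxx.
  + by rewrite (negbTE xb) eqxx (negbTE (old_neq_b par.1)) (negbTE (old_neq_x par.1)) ltnS hP.
  + have nT := child_mem ppT par.
    rewrite (negbTE (old_neq_b par.1)) (negbTE (old_neq_x par.1)).
    by rewrite (negbTE (old_neq_b nT)) (negbTE (old_neq_x nT)) ltnS hP.
Qed.

Lemma op2_subst_premise n :
  n \in nodes T -> subst_premise op2_tset n -> n <> C /\ subst_premise T n.
Proof.
move=> nT /subst_premiseE [p [/(op2_parent_old nT) [nC par] sub]]; split=> //.
by apply/subst_premiseE; exists p; rewrite -(same_rule_subst (op2_same_rule par.1)).
Qed.

Lemma op2_other_premise n : n \in nodes T -> other_premise op2_tset n -> other_premise T n.
Proof.
move=> nT /other_premiseE [p [/(op2_parent_old nT) [_ par] oth]].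
by apply/other_premiseE; exists p; rewrite -(same_rule_other (op2_same_rule par.1)).
Qed.

Lemma op2_measure :
  is_companion T C -> ~ is_root T C -> redex_measure op2_tset < redex_measure T.
Proof.
move=> compC nrootC.
have no_companion c : c \notin nodes T -> ~ companion_redex op2_tset c.
  move=> cT [/op2_companion [cC|cmp] _]; last exact: (fresh_not_companion ppT cT cmp).
  by move: cT; rewrite cC CT.
have x_nbud : ~ is_bud op2_tset x by rewrite /is_bud /= /upd (negbTE xb) eqxx.
have no_bud_b : ~ bud_redex op2_tset b.
  move=> [_ /other_premiseE [p [/op2_parent [[-> _]|[[bx _]|[_ par]]] oth]]].
  - by case: oth => r [ch]; rewrite /= /upd (negbTE xb) eqxx.
  - by move: xb; rewrite bx eqxx.
  - exact: (fresh_not_child ppT b_fresh par).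
have no_premise_b : ~ premise_redex op2_tset b.
  by move=> [+ _]; rewrite /is_internal op2_children eqxx.
rewrite /redex_measure; have -> : nodes op2_tset = x :: b :: nodes T by [].
rewrite !pcount_cons !(asboolF (no_companion _ _)) // (asboolF no_bud_b) (asboolF no_premise_b).
rewrite (asboolF (P := bud_redex _ x)); last by move=> [/x_nbud].
have lt_companion :
    pcount (companion_redex op2_tset) (nodes T) < pcount (companion_redex T) (nodes T).
  apply: (pcount_lt (x := C)) => //; last by case=> _; apply; apply/(op2_root CT); left.
  move=> n nT [/op2_companion [nC|cmp] nroot]; first by case: nroot; apply/(op2_root nT); left.
  by split=> // root; apply: nroot; apply/(op2_root nT); right.
have le_bud : pcount (bud_redex op2_tset) (nodes T) <= pcount (bud_redex T) (nodes T).
  apply: pcount_le => n nT [bud oth]; split; last exact: op2_other_premise.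
  by rewrite -(same_rule_bud (op2_same_rule nT)).
have le_premise : pcount (premise_redex op2_tset) (nodes T) <= pcount (premise_redex T) (nodes T).
  apply: pcount_le => n nT [int /(op2_subst_premise nT) [_ sub]]; split=> //.
  by rewrite -(op2_internal nT).
have := leq_b1 `[< premise_redex op2_tset x >]; lia.
Qed.

End Op2.

Section Op3.
Variables (L : calc) (T : tset L) (B b : nat).
Hypotheses (ppT : preproof_tset T) (BT : B \in nodes T) (budB : is_bud T B).
Hypothesis b_fresh : b \notin nodes T.

Definition op3_tset : tset L :=
  TSet (b :: nodes T) (upd (lab T) b (lab T B))
       (upd (upd (app T) B (Some (RSubst (empty_subst L), [:: b]))) b None)
       (upd (Defs.comp T) b (Defs.comp T B)).

Let old_neq y : y \in nodes T -> y != b := memPn b_fresh y.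

Lemma parent_neq_bud p n : is_parent T p n -> p != B.
Proof. by move=> [_]; apply: contraTneq => ->; rewrite /children budB. Qed.

Lemma op3_children y :
  children op3_tset y = if y == b then [::] else if y == B then [:: b] else children T y.
Proof. by rewrite /children /= /upd; case: eqP => //; case: eqP. Qed.

Lemma op3_parent p n : is_parent op3_tset p n <-> (p = B /\ n = b) \/ is_parent T p n.
Proof.
split.
  move=> [pT']; rewrite op3_children; case: eqP => // /eqP pb.
  case: eqP => [-> | _]; first by rewrite inE => /eqP ->; left.
  by move: pT'; rewrite inE (negbTE pb) /= => pT pn; right.
case=> [[-> ->] | par].
  by rewrite /is_parent op3_children (negbTE (old_neq BT)) eqxx !inE eqxx BT orbT.
split; first by rewrite inE par.1 orbT.
by rewrite op3_children (negbTE (old_neq par.1)) (negbTE (parent_neq_bud par)); case: par.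
Qed.

Lemma op3_same_rule y : y \in nodes T -> y != B -> same_rule T op3_tset y.
Proof. by move=> /old_neq yb yB; rewrite /same_rule /= /upd (negbTE yb) (negbTE yB). Qed.

Lemma op3_internal y : y \in nodes T -> y != B -> is_internal op3_tset y <-> is_internal T y.
Proof. by move=> /old_neq yb yB; rewrite /is_internal op3_children (negbTE yb) (negbTE yB). Qed.

Lemma op3_lab y : y \in nodes T -> lab op3_tset y = lab T y.
Proof. by move=> /old_neq yb; rewrite /= /upd (negbTE yb). Qed.

Lemma op3_B_nbud : ~ is_bud op3_tset B.
Proof. by rewrite /is_bud /= /upd (negbTE (old_neq BT)) eqxx. Qed.

Lemma op3_companion c : is_companion op3_tset c <-> is_companion T c.
Proof.
split.
  move=> [n [nT' [bud]]]; rewrite /= /upd; case: eqP => [_ <-|/eqP nb nc]; first by exists B.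
  have nB : n != B by apply: contraPneq bud => ->; apply: op3_B_nbud.
  move: nT'; rewrite inE (negbTE nb) => nT; exists n.
  by rewrite -(same_rule_bud (op3_same_rule nT nB)).
move=> [n [nT [bud nc]]]; case: (eqVneq n B) => [nB|nB].
  by exists b; rewrite inE eqxx /is_bud /= /upd eqxx -nB.
exists n; rewrite inE nT orbT (same_rule_bud (op3_same_rule nT nB)).
by rewrite /= /upd (negbTE (old_neq nT)).
Qed.

Lemma op3_root n : n \in nodes T -> is_root op3_tset n <-> is_root T n.
Proof.
move=> nT; rewrite /is_root inE nT orbT; split=> -[_ nopar]; split=> // -[p par].
  by apply: nopar; exists p; apply/op3_parent; right.
case/op3_parent: par => [[_ nb]|par]; first by move: (old_neq nT); rewrite nb eqxx.
by apply: nopar; exists p.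
Qed.

Lemma op3_preproof : preproof_tset op3_tset.
Proof.
case: ppT => uT wf uniq_par [h hP]; have bB := old_neq BT; split.
- by rewrite /= b_fresh uT.
- move=> n; rewrite inE => /orP [/eqP-> | nT].
    have cT := comp_mem ppT BT budB.
    rewrite /= /upd !eqxx inE cT orbT (negbTE (old_neq cT)).
    by move: (wf B BT); rewrite budB => -[].
  rewrite /= /upd (negbTE (old_neq nT)); case: eqP => [-> | /eqP nB].
    split=> //; first by move=> y; rewrite !inE => ->.
    by rewrite /= eqxx; exists (lab T B); rewrite subst_seq_empty.
  move: (wf n nT); case: (app T n) => [[r ch] [chT uch rok] | [cT clab]].
    have -> : [seq (if y == b then lab T B else lab T y) | y <- ch] = map (lab T) ch.
      by apply/eq_in_map => y /chT /old_neq /negbTE ->.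
    by split=> // y /chT yT; rewrite inE yT orbT.
  by rewrite (negbTE (old_neq cT)) inE cT orbT clab.
- move=> p q n /op3_parent [[-> ->]|par] /op3_parent [[-> nb]|par'] //.
  + by case: (fresh_not_child ppT b_fresh par').
  + by rewrite nb in par; case: (fresh_not_child ppT b_fresh par).
  + exact: uniq_par par par'.
- exists (fun y => if y == b then 0 else (h y).+1) => p n /op3_parent [[-> ->]|par].
    by rewrite eqxx (negbTE bB).
  by rewrite (negbTE (old_neq par.1)) (negbTE (old_neq (child_mem ppT par))) ltnS hP.
Qed.

Lemma op3_parent_old p n : n \in nodes T -> is_parent op3_tset p n -> is_parent T p n.
Proof. by move=> nT /op3_parent [[_ nb]|//]; move: (old_neq nT); rewrite nb eqxx. Qed.

Lemma op3_subst_premise n : n \in nodes T -> subst_premise op3_tset n -> subst_premise T n.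
Proof.
move=> nT /subst_premiseE [p [/(op3_parent_old nT) par sub]]; apply/subst_premiseE.
by exists p; rewrite -(same_rule_subst (op3_same_rule par.1 (parent_neq_bud par))).
Qed.

Lemma op3_other_premise n : n \in nodes T -> other_premise op3_tset n -> other_premise T n.
Proof.
move=> nT /other_premiseE [p [/(op3_parent_old nT) par oth]]; apply/other_premiseE.
by exists p; rewrite -(same_rule_other (op3_same_rule par.1 (parent_neq_bud par))).
Qed.

Lemma op3_measure : other_premise T B -> redex_measure op3_tset < redex_measure T.
Proof.
move=> othB.
have no_companion : ~ companion_redex op3_tset b.
  by move=> [/op3_companion cmp _]; apply: (fresh_not_companion ppT b_fresh cmp).
have no_bud : ~ bud_redex op3_tset b.
  move=> [_ /other_premiseE [p [/op3_parent [[-> _]|par] oth]]].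
    by case: oth => r [ch]; rewrite /= /upd (negbTE (old_neq BT)) eqxx.
  exact: (fresh_not_child ppT b_fresh par).
have no_premise : ~ premise_redex op3_tset b.
  by move=> [+ _]; rewrite /is_internal op3_children eqxx.
rewrite /redex_measure; have -> : nodes op3_tset = b :: nodes T by [].
rewrite !pcount_cons !asboolF // !add0n.
have le_companion :
    pcount (companion_redex op3_tset) (nodes T) <= pcount (companion_redex T) (nodes T).
  by apply: pcount_le => n nT [/op3_companion cmp]; rewrite (op3_root nT).
have lt_bud : pcount (bud_redex op3_tset) (nodes T) < pcount (bud_redex T) (nodes T).
  apply: (pcount_lt (x := B)) => //; last by case=> /op3_B_nbud.
  move=> n nT [bud /(op3_other_premise nT) oth]; split=> //.
  have nB : n != B by apply: contraPneq bud => ->; apply: op3_B_nbud.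
  by rewrite -(same_rule_bud (op3_same_rule nT nB)).
have le_premise : pcount (premise_redex op3_tset) (nodes T) <= pcount (premise_redex T) (nodes T).
  apply: pcount_le => n nT [int /(op3_subst_premise nT) sub]; split=> //.
  case: (eqVneq n B) => [nB|nB]; last by rewrite -(op3_internal nT nB).
  have /subst_premiseE [p [par subp]] := sub; have /other_premiseE [q [par' othq]] := othB.
  rewrite nB in par; rewrite (parent_uniq ppT par par') in subp.
  by case: (subst_other_nodeF subp othq).
lia.
Qed.

End Op3.

Section Normalisation.
Variable L : calc.
Implicit Types (T : tset L).

Lemma norm_step_preproof T T' : preproof_tset T -> norm_step T T' -> preproof_tset T'.
Proof.
move=> ppT [[N [b [NT _ _ b_fresh ->]]] | [[C [x [b [CT _ _ [x_fresh b_fresh xb] ->]]]]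
           | [B [b [BT budB _ b_fresh ->]]]]].
- exact: op1_preproof.
- exact: op2_preproof.
- exact: op3_preproof.
Qed.

Lemma norm_step_measure T T' :
  preproof_tset T -> norm_step T T' -> redex_measure T' < redex_measure T.
Proof.
move=> ppT [[N [b [NT intN subN b_fresh ->]]]
           | [[C [x [b [CT compC nrootC [x_fresh b_fresh xb] ->]]]]
           | [B [b [BT budB othB b_fresh ->]]]]].
- exact: op1_measure.
- exact: op2_measure.
- exact: op3_measure.
Qed.

Lemma norm_step_root T T' r : preproof_tset T -> is_root T r -> norm_step T T' ->
  is_root T' r /\ lab T' r = lab T r.
Proof.
move=> ppT root; have rT := root.1.
move=> [[N [b [NT _ _ b_fresh ->]]] | [[C [x [b [CT _ _ [x_fresh b_fresh xb] ->]]]]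
           | [B [b [BT budB _ b_fresh ->]]]]].
- by rewrite op1_root ?op1_lab //; split=> //; right.
- by rewrite op2_root ?op2_lab //; split=> //; right.
- by rewrite op3_root ?op3_lab.
Qed.

Lemma normalisation_invariant T T' r :
  clos_refl_trans (tset L) (@norm_step L) T T' -> preproof_tset T -> is_root T r ->
  [/\ preproof_tset T', is_root T' r & lab T' r = lab T r].
Proof.
elim=> {T T'} [T T' step | // | T1 T2 T3 _ IH12 _ IH23] ppT root.
  by have [root' ->] := norm_step_root ppT root step; split=> //; apply: norm_step_preproof step.
have [pp2 root2 lab2] := IH12 ppT root; have [pp3 root3 lab3] := IH23 pp2 root2.
by split=> //; rewrite lab3.
Qed.

Lemma normal_form_exists T : preproof_tset T -> exists T', normalises T T'.
Proof.
have [n] := ubnP (redex_measure T); elim: n T => // n IH T lt_n ppT.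
have [[T' step] | irreducible] := pselect (exists T', norm_step T T').
  have lt_n' : redex_measure T' < n by have := norm_step_measure ppT step; lia.
  have [T'' [steps normalT'']] := IH T' lt_n' (norm_step_preproof ppT step).
  by exists T''; split=> //; apply: rt_trans steps; apply: rt_step.
by exists T; split=> [|T' step]; [apply: rt_refl | apply: irreducible; exists T'].
Qed.

Definition fresh_nat (s : seq nat) : nat := (\max_(i <- s) i).+1.

Lemma fresh_natP s : fresh_nat s \notin s.
Proof.
by apply/negP => /(@leq_bigmax_seq _ _ xpredT id) /(_ isT); rewrite ltnn.
Qed.

Lemma normal_no_premise_redex T n : normal T -> n \in nodes T -> ~ premise_redex T n.
Proof.
move=> normalT nT [intn subn]; apply: (normalT (op1_tset T n (fresh_nat (nodes T)))); left.
by exists n, (fresh_nat (nodes T)); split=> //; apply: fresh_natP.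
Qed.

Lemma normal_no_bud_redex T n : normal T -> n \in nodes T -> ~ bud_redex T n.
Proof.
move=> normalT nT [budn othn]; apply: (normalT (op3_tset T n (fresh_nat (nodes T)))); right; right.
by exists n, (fresh_nat (nodes T)); split=> //; apply: fresh_natP.
Qed.

End Normalisation.

Section RbPaths.
Variable L : calc.
Implicit Types (T : tset L).

Lemma child_chain_last T z s y : child_chain T z (rcons s y) -> is_parent T (last z s) y.
Proof. by elim: s z => [|a s IH] z /= => [[]|[_ /IH]]. Qed.

Lemma child_chain_child T z s y :
  child_chain T z s -> y \in belast z s -> exists2 c, c \in s & is_parent T y c.
Proof.
elim: s z => [|a s IH] z //= [za chain]; rewrite inE => /orP [/eqP -> | ys].
  by exists a; rewrite ?mem_head.
by have [c cs yc] := IH a chain ys; exists c; rewrite // inE cs orbT.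
Qed.

Section NormalForm.
Variable T : tset L.
Hypotheses (ppT : preproof_tset T) (normalT : normal T).

Lemma normal_subst_child_not_internal p n :
  is_parent T p n -> is_subst_node T p -> ~ is_internal T n.
Proof.
move=> par subp intn; apply: (normal_no_premise_redex normalT (child_mem ppT par)).
by split=> //; apply/subst_premiseE; exists p.
Qed.

Lemma normal_bud_parent_subst p n : is_parent T p n -> is_bud T n -> is_subst_node T p.
Proof.
move=> par bud; case: (parent_node_kind par) => // oth.
case: (normal_no_bud_redex normalT (child_mem ppT par)); split=> //.
by apply/other_premiseE; exists p.
Qed.

Lemma rb_path_normal l H B : rb_path T l H B -> forall x, x \in l ->
  (subst_premise T x <-> x = B) /\ (is_subst_node T x <-> x = H).
Proof.
move=> [R [mid [-> -> _ chain [budB _]]]] x.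
have parH := child_chain_last chain.
have subH := normal_bud_parent_subst parH budB.
have inner y : y \in R :: mid -> exists2 c, c \in rcons mid B & is_parent T y c.
  by move=> yRm; apply: (child_chain_child chain); rewrite belast_rcons.
rewrite -[R :: rcons mid B]/(rcons (R :: mid) B) mem_rcons inE => /orP [/eqP -> | xRm].
  split; split.
  - by [].
  - by move=> _; apply/subst_premiseE; exists (last R mid).
  - by move=> [th [ch]]; rewrite budB.
  - by move=> HB; case: (parent_neq ppT parH).
have [c cpath xc] := inner x xRm.
split; split.
- move=> subx; case: (normal_no_premise_redex normalT xc.1); split=> //.
  exact: parent_internal xc.
- by move=> ->; apply/subst_premiseE; exists (last R mid).
- move=> substx; move: cpath; rewrite mem_rcons inE => /orP [/eqP cB | cmid].
    by rewrite cB in xc; apply: (parent_uniq ppT xc parH).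
  have [d _ cd] := inner c (@mem_behead _ (R :: mid) c cmid).
  by case: (normal_subst_child_not_internal xc substx (parent_internal cd)).
- by move=> ->.
Qed.

End NormalForm.

End RbPaths.

Theorem mainTheorem3 (L : calc) (T0 : tset L) (rho : nat) :
  preproof_tree T0 rho ->
  (exists T, normalises T0 T) /\
  (forall T, normalises T0 T ->
     [/\ preproof_tset T,
         (exists r, is_root T r /\ lab T r = lab T0 rho) &
         (forall l H B, rb_path T l H B ->
            forall x, x \in l ->
              (subst_premise T x <-> x = B) /\ (is_subst_node T x <-> x = H))]).
Proof.
move=> [ppT0 root0 _]; split; first exact: normal_form_exists.
move=> T [steps normalT].
have [ppT root lab_rho] := normalisation_invariant steps ppT0 root0.
split=> //; first by exists rho.
exact: rb_path_normal.
Qed.
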